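(* Let $\mathbf{w}\in\Sigma^\omega$ be an infinite word with appearance constant $\mathbf{A}_\mathbf{w}<\infty$. Then $\mathbf{w}[0..n-1]$ has a string attractor of size $O(\mathbf{A}_\mathbf{w}\log n)$ (with an absolute implied constant).
   Context: $\Sigma$ is a finite alphabet; words are indexed from $0$. The appearance constant $\mathbf{A}_\mathbf{w}$ is the least constant $C$ (if any) such that for every $m\ge1$, every length-$m$ factor of $\mathbf{w}$ has an occurrence in the prefix of $\mathbf{w}$ of length at most $Cm$. A string attractor of a finite word $x=x[0..n-1]$ is a set $S\subseteq\{0,\ldots,n-1\}$ such that every nonempty factor of $x$ has an occurrence $x[p..q]$ with $p\le i\le q$ for some $i\in S$. *)

From mathcomp Require Import all_boot.
From Stdlib Require Import Reals.

Set Implicit Arguments.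
Unset Strict Implicit.
Unset Printing Implicit Defensive.

Definition same_factor (T : Type) (w : nat -> T) (i p len : nat) : Prop :=
  forall k, (k < len)%N -> w (i + k)%N = w (p + k)%N.

Definition appearance_bound (T : Type) (w : nat -> T) (C : R) : Prop :=
  forall (m i : nat), (0 < m)%N ->
    exists p : nat, same_factor w i p m /\ (INR (p + m) <= C * INR m)%R.

(* A is the appearance constant A_w of w: the least admissible bound
   (in particular A_w < oo). *)
Definition is_appearance_constant (T : Type) (w : nat -> T) (A : R) : Prop :=
  appearance_bound w A /\ forall C : R, appearance_bound w C -> (A <= C)%R.

Definition string_attractor (T : Type) (w : nat -> T) (n : nat)
    (S : {set 'I_n}) : Prop :=
  forall i len : nat, (0 < len)%N -> (i + len <= n)%N ->
    exists p : nat, [/\ (p + len <= n)%N, same_factor w i p len &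
      exists2 s : 'I_n, s \in S & (p <= s < p + len)%N].

From mathcomp Require Import all_boot zify.
From Stdlib Require Import Reals Lra.

Set Implicit Arguments.
Unset Strict Implicit.
Unset Printing Implicit Defensive.

(* The attractor is the grid of multiples j * 2^k with 2^k <= n and j < 2 A_w.
   A factor of length len, with 2^k <= len < 2^(k+1), has an occurrence
   ending before A_w * len < 2 A_w 2^k; the first multiple of 2^k inside that
   occurrence is therefore some j * 2^k with j < 2 A_w.  The grid has
   O(log n) rows and O(A_w) columns. *)

Lemma INR_leq m n : m <= n -> (INR m <= INR n)%R.
Proof. by move/leP; apply: le_INR. Qed.

Lemma INR_leqE m n : (INR m <= INR n)%R -> m <= n.
Proof. by move/INR_le/leP. Qed.

Lemma nat_ceil_bounds (x : R) :
  (0 <= x)%R -> exists J : nat, (x <= INR J <= x + 1)%R.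
Proof.
move=> x_ge0; have [up_gt up_le] := archimed x.
have up_ge0 : (0 <= up x)%Z by apply: le_IZR; lra.
exists (Z.to_nat (up x)); rewrite INR_IZR_INZ Znat.Z2Nat.id //; lra.
Qed.

Lemma INR_expn m k : INR (expn m k) = (INR m ^ k)%R.
Proof. by elim: k => [|k IHk] //; rewrite expnS mult_INR IHk. Qed.

Lemma succ_trunc_log2_le_ln n :
  2 <= n -> (INR (trunc_log 2 n).+1 <= 4 * ln (INR n))%R.
Proof.
move=> n_ge2; set K := trunc_log 2 n.
have K_ge1 : (1 <= INR K)%R by apply: (@INR_leq 1); rewrite trunc_log_gt0.
have pow_le_n : (2 ^ K <= INR n)%R.
  by rewrite -[2%R]/(INR 2) -INR_expn; apply/INR_leq/trunc_logP; lia.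
have K_ln2_le : (INR K * ln 2 <= ln (INR n))%R.
  rewrite -ln_pow; last lra.
  have n_gt0 : (0 < INR n)%R by apply/lt_0_INR/ltP; lia.
  have pow_gt0 : (0 < 2 ^ K)%R by apply: pow_lt; lra.
  by apply: Rnot_lt_le => /(ln_lt_inv _ _ n_gt0 pow_gt0); lra.
have := ln_lt_2; rewrite S_INR; nra.
Qed.

Lemma appearance_bound_ge1 (T : Type) (w : nat -> T) (C : R) :
  appearance_bound w C -> (1 <= C)%R.
Proof.
move=> bound_C; have [p [_ p_le]] := bound_C 1 0 isT.
rewrite plus_INR /= in p_le; have := pos_INR p; lra.
Qed.

Lemma multiple_in_window p d : 0 < d -> exists j, p <= j * d < p + d.
Proof.
move=> d_gt0; exists ((p + d.-1) %/ d).
have := divn_eq (p + d.-1) d; have := ltn_pmod (p + d.-1) d_gt0; lia.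
Qed.

Lemma card_set_val_in n (s : seq nat) :
  #|[set x : 'I_n | val x \in s]| <= size s.
Proof.
have sub : [set x : 'I_n | val x \in s] \subset pmap insub s.
  by apply/subsetP => x; rewrite inE mem_pmap_sub.
apply: leq_trans (subset_leq_card sub) _; apply: leq_trans (card_size _) _.
by rewrite size_pmap count_size.
Qed.

Definition dyadic_grid (K J : nat) : seq nat :=
  [seq j * expn 2 k | k <- iota 0 K.+1, j <- iota 0 J].

Lemma size_dyadic_grid K J : size (dyadic_grid K J) = K.+1 * J.
Proof. by rewrite size_allpairs !size_iota. Qed.

Lemma dyadic_grid_meets_window K J p len :
    0 < len -> trunc_log 2 len <= K ->
    p + len <= J * expn 2 (trunc_log 2 len) ->
  exists2 s, s \in dyadic_grid K J & p <= s < p + len.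
Proof.
move=> len_gt0 k_le_K end_le; set k := trunc_log 2 len in k_le_K end_le.
have pow_le_len : expn 2 k <= len by apply: trunc_logP.
have pow_gt0 : 0 < expn 2 k by rewrite expn_gt0.
have [j /andP [p_le j_lt]] := multiple_in_window p pow_gt0.
have j_lt_J : j < J by rewrite -(ltn_pmul2r pow_gt0); lia.
exists (j * expn 2 k); last lia.
by apply: allpairs_f; rewrite mem_iota; lia.
Qed.

Lemma dyadic_grid_attractor (T : Type) (w : nat -> T) (A : R) n K J :
    appearance_bound w A -> (2 * A <= INR J)%R -> trunc_log 2 n <= K ->
  string_attractor w [set x : 'I_n | val x \in dyadic_grid K J].
Proof.
move=> bound_A two_A_le logn_le i len len_gt0 i_end.
have A_ge1 := appearance_bound_ge1 bound_A.
have [p0 [occ_p0 p0_end]] := bound_A len i len_gt0.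
(* min(i, p0) is an occurrence that fits in the prefix and ends before A len. *)
pose p := minn i p0.
have occ_p : same_factor w i p len.
  by rewrite /p; case: leqP => // _ k.
have len_lt : len < 2 * expn 2 (trunc_log 2 len).
  by rewrite -expnS; apply: trunc_log_ltn.
have p_end : p + len <= J * expn 2 (trunc_log 2 len).
  have p_le_p0 : p + len <= p0 + len by rewrite leq_add2r geq_minr.
  apply: INR_leqE; rewrite mult_INR.
  have := INR_leq p_le_p0; have := INR_leq (ltnW len_lt).
  rewrite !mult_INR plus_INR /= in p0_end *.
  have := pos_INR (expn 2 (trunc_log 2 len)); nra.
have log_len_le : trunc_log 2 len <= K.
  by apply: leq_trans logn_le; apply: leq_trunc_log; lia.
have [s s_grid s_in] := dyadic_grid_meets_window len_gt0 log_len_le p_end.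
have s_lt_n : s < n by lia.
exists p; split; [lia | exact: occ_p |].
by exists (Ordinal s_lt_n); rewrite ?inE.
Qed.

Theorem theorem15 :
  exists c : R, forall (T : finType) (w : nat -> T) (A : R),
    is_appearance_constant w A ->
    forall n : nat, (2 <= n)%N ->
      exists S : {set 'I_n},
        string_attractor w S /\ (INR #|S| <= c * A * ln (INR n))%R.
Proof.
exists 12%R => T w A [bound_A _] n n_ge2.
have A_ge1 := appearance_bound_ge1 bound_A.
have [J [two_A_le J_le]] : exists J : nat, (2 * A <= INR J <= 2 * A + 1)%R.
  by apply: nat_ceil_bounds; lra.
have J_le_3A : (INR J <= 3 * A)%R by lra.
set K := trunc_log 2 n.
exists [set x : 'I_n | val x \in dyadic_grid K J]; split.
  exact: dyadic_grid_attractor bound_A two_A_le (leqnn K).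
apply: Rle_trans (INR_leq (card_set_val_in n _)) _.
rewrite size_dyadic_grid mult_INR.
have := Rmult_le_compat _ _ _ _ (pos_INR K.+1) (pos_INR J)
  (succ_trunc_log2_le_ln n_ge2) J_le_3A.
lra.
Qed.
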